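(* Let $M=(\mathcal S,\mathcal A,\bar r_t,p_t,s_1)$ be a possibly non-time-homogeneous MDP (mean rewards $\bar r_t$ and transition probabilities $p_t$ depending on the step $t$) and $M'=(\mathcal S,\mathcal A,\bar r',p',s_1)$ a time-homogeneous communicating MDP on the same finite state and action sets, with optimal stationary policy $\pi'^*$. Suppose that for all $t=1,\dots,T$ and all states $s$, \[|\bar r_t(s,\pi'^*(s))-\bar r'(s,\pi'^*(s))|\le\Delta^r_t(s),\qquad \|p_t(\cdot\mid s,\pi'^*(s))-p'(\cdot\mid s,\pi'^*(s))\|_1\le\Delta^p_t(s).\] If $\pi'^*$ is performed on $M$ for $T$ steps and $s_t$ denotes the state visited at step $t$, then \[T\rho^*(M')-\sum_{t=1}^T\bar r_t(s_t,\pi'^*(s_t))\le\sum_{t=1}^T\big(\Lambda'\Delta^p_t(s_t)+\Delta^r_t(s_t)\big)+\sum_{t=1}^T\Big(\sum_{s'}p_t(s'\mid s_t,\pi'^*(s_t))\,\lambda'(s')-\lambda'(s_t)\Big),\] where $\lambda'$ is the bias function and $\Lambda'=\max_s\lambda'(s)-\min_s\lambda'(s)$ the bias span of $\pi'^*$ on $M'$.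
   Context: A communicating MDP is one in which for any two states $s,s'$, starting in $s$ one can reach $s'$ with positive probability by choosing appropriate actions. For a stationary policy $\pi$, $\rho(M',\pi)=\lim_{n\to\infty}\frac1n\mathbb E[\sum_{t=1}^nr_t]$ and $\rho^*(M')=\max_\pi\rho(M',\pi)$; $\pi'^*$ attains $\rho^*(M')$. The bias function $\lambda'$ of $\pi'^*$ on $M'$ satisfies the Poisson equation $\rho^*(M')-\bar r'(s,\pi'^*(s))=\sum_{s'}p'(s'\mid s,\pi'^*(s))\lambda'(s')-\lambda'(s)$ for all $s$. *)

From HB Require Import structures.
From mathcomp Require Import all_boot all_order all_algebra.
From mathcomp Require Import all_classical all_reals all_analysis.
Set Implicit Arguments. Unset Strict Implicit. Unset Printing Implicit Defensive.
Import Order.TTheory GRing.Theory Num.Theory numFieldNormedType.Exports.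
Local Open Scope ring_scope.

Section MDP.
Variables (R : realType) (S A : finType).

Definition stochastic (p : S -> A -> S -> R) : Prop :=
  forall s a, (forall s', 0 <= p s a s') /\ \sum_(s' : S) p s a s' = 1.

Definition communicating (p : S -> A -> S -> R) : Prop :=
  forall s s' : S, connect [rel x y | [exists a : A, 0 < p x a y]] s s'.

(* Distribution of the state at step n+1 when the stationary deterministic
   policy pi is run on the homogeneous MDP (p, s1) (step 1 is the Dirac at s1). *)
Fixpoint state_dist (p : S -> A -> S -> R) (pi : S -> A) (s1 : S) (n : nat)
  : S -> R :=
  match n with
  | 0 => fun s => if s == s1 then 1 else 0
  | n'.+1 => fun s' =>
      \sum_(s : S) state_dist p pi s1 n' s * p s (pi s) s'
  end.

Definition avg_reward (r : S -> A -> R) (p : S -> A -> S -> R) (s1 : S)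
  (pi : S -> A) : R :=
  let u : R^nat := fun n : nat => n%:R^-1 *
    \sum_(0 <= t < n) \sum_(s : S) state_dist p pi s1 t s * r s (pi s) in
  limn u.

Definition bias_span (f : S -> R) (s0 : S) : R :=
  \big[Num.max/f s0]_(s : S) f s - \big[Num.min/f s0]_(s : S) f s.

End MDP.

From HB Require Import structures.
From mathcomp Require Import all_boot all_order all_algebra.
From mathcomp Require Import all_classical all_reals all_analysis.
Import Order.TTheory GRing.Theory Num.Theory numFieldNormedType.Exports.
From mathcomp Require Import ring lra.
Local Open Scope ring_scope.

(* Step by step: the Poisson equation writes rho as r'(s) + (p' lambda)(s) - lambda(s).
   Replacing r' by r_t costs at most Delta^r_t(s), and replacing p' by p_t costs
   at most Lambda' Delta^p_t(s), because two probability vectors integrate a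
   function to values differing by at most its span times their l1 distance.
   Summing over t = 1..T gives the bound. *)

Section SpanBound.
Variables (R : realType) (S : finType).

Lemma bias_span_ge_sub (f : S -> R) (s0 s s' : S) :
  f s - f s' <= bias_span f s0.
Proof. by rewrite lerB // ?le_bigmax // bigmin_le. Qed.

(* Centering f at its minimum m uses the equal masses; then
   (q' - q) (f - m) <= |q - q'| (max f - m) termwise. *)
Lemma sum_subr_mul_le_span (q q' f : S -> R) (s0 : S) :
  \sum_s q s = \sum_s q' s ->
  \sum_s q' s * f s - \sum_s q s * f s
    <= bias_span f s0 * \sum_s `|q s - q' s|.
Proof.
move=> eq_mass; set m := \big[Num.min/f s0]_s f s.
have f_ge_m s : 0 <= f s - m by rewrite subr_ge0 bigmin_le.
have -> : \sum_s q' s * f s - \sum_s q s * f s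
          = \sum_s (q' s - q s) * (f s - m).
  transitivity (\sum_s q' s * f s - \sum_s q s * f s
                - (\sum_s q' s - \sum_s q s) * m).
    by rewrite eq_mass subrr mul0r subr0.
  by rewrite -!sumrB mulr_suml -sumrB; apply: eq_bigr => s _; ring.
rewrite mulr_sumr; apply: ler_sum => s _.
apply: le_trans (_ : `|q' s - q s| * (f s - m) <= _).
  by rewrite ler_wpM2r // real_ler_norm ?realB ?num_real.
by rewrite distrC mulrC ler_wpM2r // lerB // le_bigmax.
Qed.

End SpanBound.

Lemma gain_sub_reward_le (R : realType) (S : finType)
    (rho rt rt' dr dp : R) (q q' lam : S -> R) (s0 s : S) :
  \sum_s' q s' = 1 -> \sum_s' q' s' = 1 ->
  rho - rt' = \sum_s' q' s' * lam s' - lam s ->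
  `|rt - rt'| <= dr ->
  \sum_s' `|q s' - q' s'| <= dp ->
  rho - rt <= bias_span lam s0 * dp + dr + (\sum_s' q s' * lam s' - lam s).
Proof.
move=> q1 q'1 poisson /ler_normlP[dr_lb dr_ub] l1_dp.
have span_ge0 : 0 <= bias_span lam s0 by rewrite -(subrr (lam s0)) bias_span_ge_sub.
have := sum_subr_mul_le_span _ _ q q' lam s0 (etrans q1 (esym q'1)).
have := ler_wpM2l span_ge0 l1_dp.
lra.
Qed.

Theorem lemma2 (R : realType) (S A : finType) (s1 : S)
  (* non-homogeneous MDP M = (S, A, r_t, p_t, s1) *)
  (r : nat -> S -> A -> R) (p : nat -> S -> A -> S -> R)
  (* homogeneous communicating MDP M' = (S, A, r', p', s1) *)
  (r' : S -> A -> R) (p' : S -> A -> S -> R)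
  (pistar : {ffun S -> A}) (lambda' : S -> R)
  (T : nat) (DeltaR DeltaP : nat -> S -> R) (st : nat -> S) :
  (forall t, (1 <= t <= T)%N -> stochastic (p t)) ->
  stochastic p' ->
  communicating p' ->
  (* pistar is an optimal stationary policy of M' *)
  (forall pi : {ffun S -> A},
      avg_reward r' p' s1 pi <= avg_reward r' p' s1 pistar) ->
  (* lambda' is the bias of pistar on M': Poisson equation *)
  (forall s, avg_reward r' p' s1 pistar - r' s (pistar s)
             = \sum_(s' : S) p' s (pistar s) s' * lambda' s' - lambda' s) ->
  (forall t s, (1 <= t <= T)%N ->
     `|r t s (pistar s) - r' s (pistar s)| <= DeltaR t s) ->
  (forall t s, (1 <= t <= T)%N ->
     \sum_(s' : S) `|p t s (pistar s) s' - p' s (pistar s) s'| <= DeltaP t s) ->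
  (* st is a trajectory of pistar run on M for T steps *)
  st 1%N = s1 ->
  (forall t, (1 <= t < T)%N ->
     0 < p t (st t) (pistar (st t)) (st t.+1)) ->
  T%:R * avg_reward r' p' s1 pistar
    - \sum_(1 <= t < T.+1) r t (st t) (pistar (st t))
  <= \sum_(1 <= t < T.+1)
        (bias_span lambda' s1 * DeltaP t (st t) + DeltaR t (st t))
     + \sum_(1 <= t < T.+1)
        (\sum_(s' : S) p t (st t) (pistar (st t)) s' * lambda' s'
         - lambda' (st t)).
Proof.
move=> p_stoch p'_stoch _ _ poisson dr_bound dp_bound _ _.
set rho := avg_reward r' p' s1 pistar.
have -> : T%:R * rho = \sum_(1 <= t < T.+1) rho.
  by rewrite sumr_const_nat subn1 mulr_natl.
rewrite -sumrB -big_split /=; apply: ler_sum_nat => t /andP[t_ge1 t_leT].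
have t_range : (1 <= t <= T)%N by rewrite t_ge1 -ltnS.
have [_ q1] := p_stoch t t_range (st t) (pistar (st t)).
have [_ q'1] := p'_stoch (st t) (pistar (st t)).
by apply: gain_sub_reward_le q1 q'1 (poisson (st t)) _ _;
  [apply: dr_bound | apply: dp_bound].
Qed.
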